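(* Let $(X_t)_{t\ge0}$ be the continuous-time random walk on $\mathbb{Z}$ started at $0$ with generator $(Lf)(x)=\frac12\left(f(x+1)-f(x)\right)+\frac12\left(f(x-1)-f(x)\right)$. Then there is a universal constant $c>0$ such that for all $t\ge0$, $\mathrm{Varent}(X_t)\ge c\,\mathcal{V}(t)$, where $\mathcal{V}(t)=t\log^2\!\left(1+\frac1{\sqrt t}\right)$ (and $\mathcal{V}(0)=0$).
   Context: For a discrete random variable $X$ with probability mass function $f$, $\mathrm{Varent}(X):=\mathrm{Var}(\log f(X))$. *)

From Stdlib Require Import Reals ZArith.
From Coquelicot Require Import Coquelicot.
Open Scope R_scope.

(* Discrete-time simple symmetric random walk on Z started at 0:
   P(S_n = k) = C(n, (n+k)/2) / 2^n  if |k| <= n and n+k even, else 0. *)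
Definition srw_pmf (n : nat) (k : Z) : R :=
  if andb (Z.abs k <=? Z.of_nat n)%Z (Z.even (Z.of_nat n + k))
  then Binomial.C n (Z.to_nat ((Z.of_nat n + k) / 2)) / 2 ^ n
  else 0.

(* Continuous-time random walk with generator
   (Lf)(x) = 1/2 (f(x+1)-f(x)) + 1/2 (f(x-1)-f(x)), started at 0.
   Total jump rate 1, each jump +-1 with prob. 1/2, so X_t = S_{N_t} with
   N_t ~ Poisson(t) independent of S (uniformization):
   P(X_t = k) = sum_n e^{-t} t^n / n! * P(S_n = k). *)
Definition ctrw_pmf (t : R) (k : Z) : R :=
  Series (fun n : nat => exp (- t) * t ^ n / INR (fact n) * srw_pmf n k).

Definition sumZ (f : Z -> R) : R :=
  Series (fun n : nat => f (Z.of_nat n)) + Series (fun n : nat => f (- Z.of_nat (S n))%Z).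

Definition expectZ (p : Z -> R) (g : Z -> R) : R := sumZ (fun k => p k * g k).

Definition varZ (p : Z -> R) (g : Z -> R) : R :=
  expectZ p (fun k => (g k - expectZ p g) ^ 2).

Definition varent (p : Z -> R) : R := varZ p (fun k => ln (p k)).

Definition calV (t : R) : R :=
  if Req_EM_T t 0 then 0 else t * (ln (1 + / sqrt t)) ^ 2.

(* Write [p = ctrw_pmf t], a Poisson(t) mixture of simple random walk laws.
   It satisfies the Stein identity [k p(k) = t/2 (p(k-1) - p(k+1))].

   For [t >= 1] we test [ln p] against [z(k) = k^2 - t], which has mean [0] and second
   moment [2t^2 + t]; expanding [E[(ln p - E ln p + lam z)^2] >= 0] bounds the varentropy
   from below by [-2 lam E[z ln p] - lam^2 E[z^2]].  Summation by parts with the Stein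
   identity rewrites [E[k^2 ln p]] through the increments [ln p(k +- 1) - ln p(k)]; the
   Gibbs inequality [a (ln b - ln a) <= b - a] makes their contributions nonpositive and,
   combined once more with the Stein identity, bounds [E[k (ln p(k+1) - ln p(k-1))]] by
   [-t/(t+2)].  Hence [E[z ln p] <= -t/6] and the varentropy is at least [1/108].

   For [t <= 1] the atoms [0] and [1] alone suffice: both have mass at least [t/6], and
   [p(1) <= t/2 p(0)] gives [ln p(0) - ln p(1) >= ln (2/t) >= ln (1 + 1/sqrt t)].
   Since [V(t) <= 1] for [t >= 1], the constant [c = 1/108] works throughout. *)

From Stdlib Require Import Reals ZArith Lia Lra.
From Coquelicot Require Import Coquelicot.
Open Scope R_scope.

(* No summability hypothesis: a divergent series has [Series] value [0]. *)
Lemma Series_nonneg (a : nat -> R) : (forall n, 0 <= a n) -> 0 <= Series a.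
Proof.
  intros Ha. unfold Series.
  assert (Hlim : Rbar_le (Lim_seq (fun _ => 0)) (Lim_seq (sum_n a))).
  { apply Lim_seq_le_loc. exists 0%nat. intros n _.
    induction n as [|n IH]; [rewrite sum_O; apply Ha |].
    rewrite sum_Sn. apply Rplus_le_le_0_compat; auto. }
  rewrite Lim_seq_const in Hlim.
  destruct (Lim_seq (sum_n a)); simpl in *; lra.
Qed.

Lemma Series_0 (a : nat -> R) : (forall n, a n = 0) -> Series a = 0.
Proof.
  intros Ha. rewrite (Series_ext a (fun n => 0 * a n)) by (intros n; rewrite Ha; ring).
  rewrite Series_scal_l. ring.
Qed.

Lemma Series_le_Series (a b : nat -> R) : ex_series a -> ex_series b ->
  (forall n, a n <= b n) -> Series a <= Series b.
Proof.
  intros Ha Hb Hab.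
  assert (H : 0 <= Series (fun n => b n - a n)) by (apply Series_nonneg; intros n; specialize (Hab n); lra).
  rewrite Series_minus in H by assumption. lra.
Qed.

Lemma sum_n_le_Series (a : nat -> R) N : ex_series a -> (forall n, 0 <= a n) ->
  sum_n a N <= Series a.
Proof.
  intros Ha Hnn. rewrite (Series_incr_n a (S N)) by (lia || assumption).
  rewrite sum_n_Reals. simpl pred.
  pose proof (Series_nonneg (fun k => a (S N + k)%nat) (fun n => Hnn _)). lra.
Qed.

Lemma Series_ge_term (a : nat -> R) n : ex_series a -> (forall m, 0 <= a m) -> a n <= Series a.
Proof.
  intros Ha Hnn. eapply Rle_trans; [|exact (sum_n_le_Series a n Ha Hnn)].
  destruct n as [|n]; [rewrite sum_O; lra|].
  rewrite sum_Sn, sum_n_Reals. pose proof (cond_pos_sum a n Hnn). change plus with Rplus. lra.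
Qed.

Lemma sum_n_Series (c : nat -> nat -> R) N : (forall i, ex_series (fun n => c n i)) ->
  ex_series (fun n => sum_n (c n) N) /\
  sum_n (fun i => Series (fun n => c n i)) N = Series (fun n => sum_n (c n) N).
Proof.
  intros Hc. induction N as [|N [Hex Heq]].
  - rewrite sum_O. split.
    + apply (ex_series_ext (fun n => c n 0%nat)); [intros n; now rewrite sum_O | apply Hc].
    + apply Series_ext. intros n. now rewrite sum_O.
  - rewrite sum_Sn, Heq. split.
    + apply (ex_series_ext (fun n => sum_n (c n) N + c n (S N))).
      * intros n. now rewrite sum_Sn.
      * now apply (ex_series_plus (V := R_NormedModule)).
    + rewrite <- Series_plus by auto. apply Series_ext. intros n. now rewrite sum_Sn.
Qed.

Lemma is_series_exp x : is_series (fun n => x ^ n / INR (fact n)) (exp x).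
Proof.
  eapply is_series_ext; [|exact (is_exp_Reals x)].
  intros n. simpl. rewrite pow_n_pow. unfold scal; simpl; unfold mult; simpl.
  field. apply INR_fact_neq_0.
Qed.

Lemma pow_div_fact_le_exp x n : 0 <= x -> x ^ n / INR (fact n) <= exp x.
Proof.
  intros Hx. eapply Rle_trans; [|exact (exp_ge_taylor x n Hx)].
  destruct n as [|n]; [simpl; lra|]. simpl.
  enough (0 <= sum_f_R0 (fun k => x ^ k / INR (fact k)) n) by lra.
  apply cond_pos_sum. intros k. apply Rmult_le_pos; [now apply pow_le|].
  left. apply Rinv_0_lt_compat, lt_0_INR, lt_O_fact.
Qed.

Lemma exp_INR n : exp (INR n) = exp 1 ^ n.
Proof. rewrite <- Rpower_pow by apply exp_pos. unfold Rpower. now rewrite ln_exp, Rmult_1_r. Qed.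

Lemma exp_le_compat x y : x <= y -> exp x <= exp y.
Proof. intros [Hlt | ->]; [left; now apply exp_increasing | lra]. Qed.

Lemma fact_le_exp_sqr n : INR (fact n) <= exp (INR n ^ 2).
Proof.
  induction n as [|n IH]; [simpl; rewrite Rmult_0_l, exp_0; lra|].
  rewrite fact_simpl, mult_INR. pose proof (exp_ineq1_le (INR n)). pose proof (pos_INR n).
  apply Rle_trans with (exp (INR n) * exp (INR n ^ 2)).
  - apply Rmult_le_compat; [apply pos_INR | apply pos_INR | rewrite S_INR; lra | exact IH].
  - rewrite <- exp_plus. apply exp_le_compat. rewrite S_INR. nra.
Qed.

Lemma mul_ln_ratio_le a b : 0 < a -> 0 < b -> a * (ln b - ln a) <= b - a.
Proof.
  intros Ha Hb. pose proof (exp_ineq1_le (ln (b / a))) as H.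
  rewrite exp_ln, ln_div in H by (try apply Rdiv_lt_0_compat; assumption).
  apply (Rmult_le_compat_l a) in H; [|lra].
  replace (a * (b / a)) with b in H by (field; lra). lra.
Qed.

Lemma neg_sq_div_le x q l : 0 < q -> - (x ^ 2 / q) <= l ^ 2 * q - 2 * l * x.
Proof.
  intros Hq. enough (0 <= (x - l * q) ^ 2 / q) as H.
  - replace ((x - l * q) ^ 2 / q) with (x ^ 2 / q + (l ^ 2 * q - 2 * l * x)) in H by (field; lra). lra.
  - apply Rmult_le_pos; [apply pow2_ge_0 | left; now apply Rinv_0_lt_compat].
Qed.

(** * Sums over the integers *)

Definition summableZ (f : Z -> R) : Prop :=
  ex_series (fun n => Rabs (f (Z.of_nat n))) /\
  ex_series (fun n => Rabs (f (- Z.of_nat (S n))%Z)).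

Section SumZ.

Implicit Types f g : Z -> R.

Lemma summableZ_ex_series f : summableZ f ->
  ex_series (fun n => f (Z.of_nat n)) /\ ex_series (fun n => f (- Z.of_nat (S n))%Z).
Proof. intros [H1 H2]. split; now apply ex_series_Rabs. Qed.

Lemma summableZ_le f g : (forall k, Rabs (f k) <= g k) -> summableZ g -> summableZ f.
Proof.
  intros Hfg [H1 H2].
  assert (Hdom : forall h : nat -> Z, ex_series (fun n => Rabs (g (h n))) ->
                   ex_series (fun n => Rabs (f (h n)))).
  { intros h Hg. apply (ex_series_le (V := R_CompleteNormedModule) _ (fun n => Rabs (g (h n)))); auto.
    intros n. change norm with Rabs. rewrite Rabs_Rabsolu.
    specialize (Hfg (h n)). pose proof (Rle_abs (g (h n))). lra. }
  split; now apply Hdom.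
Qed.

Lemma summableZ_ext f g : (forall k, f k = g k) -> summableZ g -> summableZ f.
Proof.
  intros Hfg [G1 G2].
  split; [apply (ex_series_ext (fun n => Rabs (g (Z.of_nat n))))
         | apply (ex_series_ext (fun n => Rabs (g (- Z.of_nat (S n))%Z)))];
    trivial; intros n; now rewrite Hfg.
Qed.

Lemma summableZ_plus f g : summableZ f -> summableZ g -> summableZ (fun k => f k + g k).
Proof.
  intros [F1 F2] [G1 G2].
  apply (summableZ_le _ (fun k => Rabs (f k) + Rabs (g k))); [intros; apply Rabs_triang|].
  assert (Habs : forall x y, Rabs (Rabs x + Rabs y) = Rabs x + Rabs y)
    by (intros; apply Rabs_pos_eq, Rplus_le_le_0_compat; apply Rabs_pos).
  split; (eapply ex_series_ext; [intros n; symmetry; apply Habs|]);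
    now apply (ex_series_plus (V := R_NormedModule)).
Qed.

Lemma summableZ_scal c f : summableZ f -> summableZ (fun k => c * f k).
Proof.
  intros [F1 F2].
  split; (eapply ex_series_ext; [intros n; symmetry; apply Rabs_mult|]);
    now apply (ex_series_scal_l (V := R_NormedModule)).
Qed.

Lemma summableZ_minus f g : summableZ f -> summableZ g -> summableZ (fun k => f k - g k).
Proof.
  intros Hf Hg. apply (summableZ_ext _ (fun k => f k + (-1) * g k)); [intros; ring|].
  now apply summableZ_plus, summableZ_scal.
Qed.

Lemma summableZ_shift_succ_iff f : summableZ (fun k => f (k + 1)%Z) <-> summableZ f.
Proof.
  unfold summableZ.
  set (pos := fun n => Rabs (f (Z.of_nat n))). set (neg := fun n => Rabs (f (- Z.of_nat n)%Z)).
  assert (Hpos : forall n, Rabs (f (Z.of_nat n + 1)%Z) = pos (S n)) by (intros; unfold pos; do 2 f_equal; lia).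
  assert (Hneg : forall n, Rabs (f (- Z.of_nat (S n) + 1)%Z) = neg n) by (intros; unfold neg; do 2 f_equal; lia).
  split; intros [H1 H2]; split.
  - apply ex_series_incr_1. exact (ex_series_ext _ _ Hpos H1).
  - apply (ex_series_incr_1 neg). exact (ex_series_ext _ _ Hneg H2).
  - apply (ex_series_ext _ _ (fun n => eq_sym (Hpos n))). now apply (ex_series_incr_1 pos).
  - apply (ex_series_ext _ _ (fun n => eq_sym (Hneg n))). now apply (ex_series_incr_1 neg).
Qed.

Lemma summableZ_shift f d : summableZ f -> summableZ (fun k => f (k + d)%Z).
Proof.
  intros Hf. induction d as [|d IH|d IH] using Z.peano_ind.
  - apply (summableZ_ext _ f); [intros; f_equal; lia | exact Hf].
  - apply (summableZ_ext _ (fun k => f (k + 1 + d)%Z)); [intros; f_equal; lia|].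
    apply (summableZ_shift_succ_iff (fun k => f (k + d)%Z)), IH.
  - apply summableZ_shift_succ_iff.
    apply (summableZ_ext _ (fun k => f (k + d)%Z)); [intros; f_equal; lia | exact IH].
Qed.

Lemma summableZ_abs_nat (a : nat -> R) : ex_series a -> (forall n, 0 <= a n) ->
  summableZ (fun k => a (Z.abs_nat k)).
Proof.
  intros Ha Hnn. split.
  - apply (ex_series_ext a); [|exact Ha].
    intros n. rewrite Zabs2Nat.id. symmetry. apply Rabs_pos_eq, Hnn.
  - apply (ex_series_ext (fun n => a (S n))); [|now apply (ex_series_incr_1 a)].
    intros n. replace (Z.abs_nat _) with (S n) by lia. symmetry. apply Rabs_pos_eq, Hnn.
Qed.

Lemma sumZ_ext f g : (forall k, f k = g k) -> sumZ f = sumZ g.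
Proof. intros Hfg. unfold sumZ. f_equal; apply Series_ext; intros; apply Hfg. Qed.

Lemma sumZ_plus f g : summableZ f -> summableZ g -> sumZ (fun k => f k + g k) = sumZ f + sumZ g.
Proof.
  intros Hf Hg. apply summableZ_ex_series in Hf as [F1 F2], Hg as [G1 G2].
  unfold sumZ. rewrite !Series_plus by assumption. ring.
Qed.

Lemma sumZ_scal c f : sumZ (fun k => c * f k) = c * sumZ f.
Proof. unfold sumZ. rewrite !Series_scal_l. ring. Qed.

Lemma sumZ_minus f g : summableZ f -> summableZ g -> sumZ (fun k => f k - g k) = sumZ f - sumZ g.
Proof.
  intros Hf Hg. rewrite (sumZ_ext _ (fun k => f k + (-1) * g k)) by (intros; ring).
  rewrite sumZ_plus, sumZ_scal by (auto using summableZ_scal). ring.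
Qed.

Lemma sumZ_le f g : summableZ f -> summableZ g -> (forall k, f k <= g k) -> sumZ f <= sumZ g.
Proof.
  intros Hf Hg Hfg. apply summableZ_ex_series in Hf as [F1 F2], Hg as [G1 G2].
  unfold sumZ. apply Rplus_le_compat; now apply Series_le_Series.
Qed.

Lemma sumZ_nonneg f : (forall k, 0 <= f k) -> 0 <= sumZ f.
Proof. intros Hf. unfold sumZ. apply Rplus_le_le_0_compat; now apply Series_nonneg. Qed.

Lemma Series_nat_le_sumZ f : (forall k, 0 <= f k) -> Series (fun n => f (Z.of_nat n)) <= sumZ f.
Proof.
  intros Hf. unfold sumZ.
  pose proof (Series_nonneg (fun n => f (- Z.of_nat (S n))%Z) (fun n => Hf _)). lra.
Qed.

Lemma sumZ_ge_0_1 f : summableZ f -> (forall k, 0 <= f k) -> f 0%Z + f 1%Z <= sumZ f.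
Proof.
  intros Hf Hnn. eapply Rle_trans; [|exact (Series_nat_le_sumZ f Hnn)].
  eapply Rle_trans; [|apply (sum_n_le_Series _ 1); [apply summableZ_ex_series, Hf | intros; apply Hnn]].
  rewrite sum_Sn, sum_O. right. reflexivity.
Qed.

Lemma sumZ_shift_succ f : summableZ f -> sumZ (fun k => f (k + 1)%Z) = sumZ f.
Proof.
  intros Hf. apply summableZ_ex_series in Hf as [F1 F2]. unfold sumZ.
  assert (F2' : ex_series (fun n => f (- Z.of_nat n)%Z)) by now apply ex_series_incr_1.
  rewrite (Series_ext (fun n => f (Z.of_nat n + 1)%Z) (fun n => f (Z.of_nat (S n))))
    by (intros; f_equal; lia).
  rewrite (Series_ext (fun n => f (- Z.of_nat (S n) + 1)%Z) (fun n => f (- Z.of_nat n)%Z))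
    by (intros; f_equal; lia).
  rewrite (Series_incr_1 (fun n => f (Z.of_nat n))), (Series_incr_1 (fun n => f (- Z.of_nat n)%Z))
    by assumption.
  simpl. ring.
Qed.

Lemma sumZ_shift f d : summableZ f -> sumZ (fun k => f (k + d)%Z) = sumZ f.
Proof.
  intros Hf. induction d as [|d IH|d IH] using Z.peano_ind.
  - apply sumZ_ext. intros; f_equal; lia.
  - rewrite <- IH, <- (sumZ_shift_succ (fun k => f (k + d)%Z)) by now apply summableZ_shift.
    apply sumZ_ext. intros; f_equal; lia.
  - rewrite <- IH, <- (sumZ_shift_succ (fun k => f (k + Z.pred d)%Z)) by now apply summableZ_shift.
    apply sumZ_ext. intros; f_equal; lia.
Qed.

Lemma sumZ_even f : summableZ f -> (forall k, f (- k)%Z = f k) ->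
  sumZ f = 2 * Series (fun n => f (Z.of_nat n)) - f 0%Z.
Proof.
  intros Hf Heven. apply summableZ_ex_series in Hf as [F1 F2]. unfold sumZ.
  rewrite (Series_ext (fun n => f (- Z.of_nat (S n))%Z) (fun n => f (Z.of_nat (S n))))
    by (intros; apply Heven).
  rewrite (Series_incr_1 (fun n => f (Z.of_nat n))) by assumption. simpl. ring.
Qed.

Definition sumZ_partial (f : Z -> R) (N : nat) : R :=
  sum_n (fun n => f (Z.of_nat n)) N + sum_n (fun n => f (- Z.of_nat (S n))%Z) N.

Lemma is_lim_seq_sumZ_partial f : summableZ f -> is_lim_seq (sumZ_partial f) (sumZ f).
Proof.
  intros Hf. apply summableZ_ex_series in Hf as [F1 F2].
  apply is_lim_seq_plus'; now apply Series_correct.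
Qed.

Lemma sumZ_partial_nonneg f N : (forall k, 0 <= f k) -> 0 <= sumZ_partial f N.
Proof.
  intros Hnn. unfold sumZ_partial. rewrite !sum_n_Reals.
  apply Rplus_le_le_0_compat; apply cond_pos_sum; auto.
Qed.

Lemma sumZ_partial_le f N : summableZ f -> (forall k, 0 <= f k) -> sumZ_partial f N <= sumZ f.
Proof.
  intros Hf Hnn. apply summableZ_ex_series in Hf as [F1 F2].
  apply Rplus_le_compat; apply sum_n_le_Series; auto.
Qed.

Lemma sumZ_partial_eq f N : summableZ f -> (forall k, (Z.of_nat N < Z.abs k)%Z -> f k = 0) ->
  sumZ_partial f N = sumZ f.
Proof.
  intros Hf Hout. apply summableZ_ex_series in Hf as [F1 F2]. unfold sumZ, sumZ_partial.
  rewrite (Series_incr_n _ (S N) (Nat.lt_0_succ N) F1), (Series_incr_n _ (S N) (Nat.lt_0_succ N) F2).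
  rewrite !Series_0, !sum_n_Reals by (intros; apply Hout; lia). simpl. ring.
Qed.

Lemma sumZ_partial_scal c f N : sumZ_partial (fun k => c * f k) N = c * sumZ_partial f N.
Proof. unfold sumZ_partial. rewrite Rmult_plus_distr_l. f_equal; apply (sum_n_mult_l (K := R_Ring)). Qed.

Lemma sumZ_partial_Series (c : nat -> Z -> R) N : (forall k, ex_series (fun n => c n k)) ->
  sumZ_partial (fun k => Series (fun n => c n k)) N = Series (fun n => sumZ_partial (c n) N).
Proof.
  intros Hc. unfold sumZ_partial.
  destruct (sum_n_Series (fun n i => c n (Z.of_nat i)) N) as [E1 ->]; [intros; apply Hc|].
  destruct (sum_n_Series (fun n i => c n (- Z.of_nat (S i))%Z) N) as [E2 ->]; [intros; apply Hc|].
  now rewrite <- Series_plus.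
Qed.

Lemma sumZ_mul_ln_ratio_le p q : (forall k, 0 < p k) -> (forall k, 0 < q k) ->
  summableZ p -> summableZ q -> summableZ (fun k => p k * (ln (q k) - ln (p k))) ->
  sumZ (fun k => p k * (ln (q k) - ln (p k))) <= sumZ q - sumZ p.
Proof.
  intros Hp Hq Sp Sq Spq. rewrite <- sumZ_minus by assumption.
  apply sumZ_le; [assumption | now apply summableZ_minus |].
  intros k. now apply mul_ln_ratio_le.
Qed.

Lemma varZ_ge_cov_test p g z lam : (forall k, 0 <= p k) ->
  summableZ (fun k => p k * (g k - expectZ p g) ^ 2) ->
  summableZ (fun k => z k * g k * p k) -> summableZ (fun k => z k * p k) ->
  summableZ (fun k => z k ^ 2 * p k) -> sumZ (fun k => z k * p k) = 0 ->
  - 2 * lam * sumZ (fun k => z k * g k * p k) - lam ^ 2 * sumZ (fun k => z k ^ 2 * p k) <= varZ p g.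
Proof.
  intros Hp Svar Szg Sz Szz Hz. unfold varZ, expectZ at 1. set (m := expectZ p g).
  set (lower := fun k => - 2 * lam * (z k * g k * p k) + 2 * lam * m * (z k * p k)
                         - lam ^ 2 * (z k ^ 2 * p k)).
  assert (Slower : summableZ lower)
    by (apply summableZ_minus; [apply summableZ_plus|]; now apply summableZ_scal).
  replace (- 2 * lam * _ - _) with (sumZ lower).
  - apply sumZ_le; [exact Slower | exact Svar |].
    intros k. unfold lower. pose proof (Rmult_le_pos _ _ (Hp k) (pow2_ge_0 (g k - m + lam * z k))). nra.
  - unfold lower. rewrite sumZ_minus, sumZ_plus, !sumZ_scal, Hz
      by (try apply summableZ_plus; now apply summableZ_scal). ring.
Qed.

End SumZ.

(** * Polynomially bounded functions *)

Definition poly_bounded (u : Z -> R) : Prop :=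
  exists C r, forall k, Rabs (u k) <= C * (1 + Rabs (IZR k)) ^ r.

Section PolyBounded.

Implicit Types u v : Z -> R.

Lemma weight_ge_1 k : 1 <= 1 + Rabs (IZR k).
Proof. pose proof (Rabs_pos (IZR k)). lra. Qed.

Lemma weight_abs_nat k : 1 + Rabs (IZR k) = INR (S (Z.abs_nat k)).
Proof. now rewrite S_INR, <- abs_IZR, INR_IZR_INZ, Zabs2Nat.id_abs, Rplus_comm. Qed.

Lemma weight_pow_le_exp k r :
  (1 + Rabs (IZR k)) ^ r <= INR (fact r) * (exp 1 * exp 1 ^ Z.abs_nat k).
Proof.
  rewrite weight_abs_nat, <- exp_INR, <- exp_plus, Rplus_comm, <- S_INR.
  pose proof (pow_div_fact_le_exp (INR (S (Z.abs_nat k))) r (pos_INR _)) as Hexp.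
  assert (Hf : 0 < INR (fact r)) by apply lt_0_INR, lt_O_fact.
  apply (Rmult_le_compat_l (INR (fact r))) in Hexp; [|lra].
  unfold Rdiv in Hexp. rewrite (Rmult_comm (_ ^ r)), <- Rmult_assoc, Rinv_r, Rmult_1_l in Hexp; lra.
Qed.

Lemma poly_bound_nonneg u C r : (forall k, Rabs (u k) <= C * (1 + Rabs (IZR k)) ^ r) -> 0 <= C.
Proof.
  intros Hu. specialize (Hu 0%Z). rewrite Rabs_R0, Rplus_0_r, pow1 in Hu.
  pose proof (Rabs_pos (u 0%Z)). lra.
Qed.

Lemma poly_bounded_ext u v : (forall k, u k = v k) -> poly_bounded v -> poly_bounded u.
Proof. intros E [C [r Hv]]. exists C, r. intros k. rewrite E. apply Hv. Qed.

Lemma poly_bounded_const c : poly_bounded (fun _ => c).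
Proof. exists (Rabs c), 0%nat. intros k. simpl. lra. Qed.

Lemma poly_bounded_IZR : poly_bounded IZR.
Proof. exists 1, 1%nat. intros k. simpl. lra. Qed.

Lemma poly_bounded_mult u v : poly_bounded u -> poly_bounded v -> poly_bounded (fun k => u k * v k).
Proof.
  intros [C1 [r1 Hu]] [C2 [r2 Hv]]. exists (C1 * C2), (r1 + r2)%nat. intros k.
  rewrite Rabs_mult, pow_add.
  replace (C1 * C2 * _) with ((C1 * (1 + Rabs (IZR k)) ^ r1) * (C2 * (1 + Rabs (IZR k)) ^ r2)) by ring.
  apply Rmult_le_compat; auto using Rabs_pos.
Qed.

Lemma poly_bounded_plus u v : poly_bounded u -> poly_bounded v -> poly_bounded (fun k => u k + v k).
Proof.
  intros [C1 [r1 Hu]] [C2 [r2 Hv]].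
  pose proof (poly_bound_nonneg _ _ _ Hu). pose proof (poly_bound_nonneg _ _ _ Hv).
  exists (C1 + C2), (r1 + r2)%nat. intros k.
  pose proof (weight_ge_1 k) as Hw.
  assert (W1 : (1 + Rabs (IZR k)) ^ r1 <= (1 + Rabs (IZR k)) ^ (r1 + r2)) by (apply Rle_pow; [lra | lia]).
  assert (W2 : (1 + Rabs (IZR k)) ^ r2 <= (1 + Rabs (IZR k)) ^ (r1 + r2)) by (apply Rle_pow; [lra | lia]).
  specialize (Hu k). specialize (Hv k). pose proof (Rabs_triang (u k) (v k)).
  apply Rmult_le_compat_l with (r := C1) in W1; [|assumption].
  apply Rmult_le_compat_l with (r := C2) in W2; [|assumption]. lra.
Qed.

Lemma poly_bounded_scal c u : poly_bounded u -> poly_bounded (fun k => c * u k).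
Proof. apply poly_bounded_mult, poly_bounded_const. Qed.

Lemma poly_bounded_minus u v : poly_bounded u -> poly_bounded v -> poly_bounded (fun k => u k - v k).
Proof.
  intros Hu Hv. apply (poly_bounded_ext _ (fun k => u k + (-1) * v k)); [intros; ring|].
  now apply poly_bounded_plus, poly_bounded_scal.
Qed.

Lemma poly_bounded_pow u n : poly_bounded u -> poly_bounded (fun k => u k ^ n).
Proof.
  intros Hu. induction n as [|n IH]; [exact (poly_bounded_ext _ _ (fun k => eq_refl) (poly_bounded_const 1))|].
  now apply poly_bounded_mult.
Qed.

Lemma poly_bounded_shift u d : poly_bounded u -> poly_bounded (fun k => u (k + d)%Z).
Proof.
  intros [C [r Hu]]. pose proof (poly_bound_nonneg _ _ _ Hu).
  exists (C * (1 + Rabs (IZR d)) ^ r), r. intros k.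
  eapply Rle_trans; [apply Hu|]. rewrite Rmult_assoc, <- Rpow_mult_distr.
  apply Rmult_le_compat_l; [assumption|]. apply pow_incr. split.
  - pose proof (weight_ge_1 (k + d)). lra.
  - rewrite plus_IZR. pose proof (Rabs_triang (IZR k) (IZR d)).
    pose proof (Rabs_pos (IZR k)). pose proof (Rabs_pos (IZR d)). nra.
Qed.

End PolyBounded.

(** * The discrete-time walk *)

Lemma srw_pmf_lattice n j : (j <= n)%nat ->
  srw_pmf n (2 * Z.of_nat j - Z.of_nat n) = Binomial.C n j / 2 ^ n.
Proof.
  intros Hj. unfold srw_pmf.
  replace (Z.of_nat n + (2 * Z.of_nat j - Z.of_nat n))%Z with (Z.of_nat j * 2)%Z by ring.
  rewrite Z.div_mul, Nat2Z.id by lia.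
  replace (Z.abs _ <=? Z.of_nat n)%Z with true by (symmetry; apply Z.leb_le; lia).
  now rewrite Z.even_mul, Z.even_2, Bool.orb_true_r.
Qed.

Lemma srw_pmf_off_lattice n k :
  (forall j, (j <= n)%nat -> k <> (2 * Z.of_nat j - Z.of_nat n)%Z) -> srw_pmf n k = 0.
Proof.
  intros Hoff. unfold srw_pmf.
  destruct (Z.abs k <=? Z.of_nat n)%Z eqn:Hk; [|reflexivity].
  destruct (Z.even (Z.of_nat n + k)) eqn:Hev; [|reflexivity].
  apply Z.leb_le in Hk. apply Z.even_spec in Hev as [m Hm].
  exfalso. apply (Hoff (Z.to_nat m)); lia.
Qed.

Lemma lattice_or_off_lattice n k :
  (exists j, (j <= n)%nat /\ k = (2 * Z.of_nat j - Z.of_nat n)%Z) \/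
  (forall j, (j <= n)%nat -> k <> (2 * Z.of_nat j - Z.of_nat n)%Z).
Proof.
  destruct ((Z.abs k <=? Z.of_nat n)%Z && Z.even (Z.of_nat n + k))%bool eqn:E.
  - left. apply andb_prop in E as [Hk Hev].
    apply Z.leb_le in Hk. apply Z.even_spec in Hev as [m Hm].
    exists (Z.to_nat m). lia.
  - right. intros j Hj ->. revert E.
    replace (Z.of_nat n + (2 * Z.of_nat j - Z.of_nat n))%Z with (2 * Z.of_nat j)%Z by ring.
    rewrite Z.even_mul, Z.even_2. replace (Z.abs _ <=? Z.of_nat n)%Z with true.
    + discriminate.
    + symmetry. apply Z.leb_le. lia.
Qed.

Lemma srw_pmf_0 k : srw_pmf 0 k = if Z.eq_dec k 0 then 1 else 0.
Proof.
  destruct (Z.eq_dec k 0) as [->|Hk].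
  - change 0%Z with (2 * Z.of_nat 0 - Z.of_nat 0)%Z.
    rewrite srw_pmf_lattice, C_n_0 by lia. simpl. lra.
  - apply srw_pmf_off_lattice. intros j Hj. lia.
Qed.

Lemma srw_pmf_succ n k : srw_pmf (S n) k = (srw_pmf n (k - 1) + srw_pmf n (k + 1)) / 2.
Proof.
  assert (Hpow : 2 ^ S n = 2 * 2 ^ n) by reflexivity.
  assert (Hpos : 0 < 2 ^ n) by (apply pow_lt; lra).
  destruct (lattice_or_off_lattice (S n) k) as [[j [Hj ->]] | Hoff].
  - rewrite srw_pmf_lattice, Hpow by exact Hj.
    destruct j as [|j].
    + rewrite (srw_pmf_off_lattice n (_ - 1)) by (intros i Hi; lia).
      replace (_ + 1)%Z with (2 * Z.of_nat 0 - Z.of_nat n)%Z by lia.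
      rewrite srw_pmf_lattice, !C_n_0 by lia. field. lra.
    + destruct (Nat.eq_dec j n) as [->|Hjn].
      * rewrite (srw_pmf_off_lattice n (_ + 1)) by (intros i Hi; lia).
        replace (_ - 1)%Z with (2 * Z.of_nat n - Z.of_nat n)%Z by lia.
        rewrite srw_pmf_lattice, !C_n_n by lia. field. lra.
      * replace (_ - 1)%Z with (2 * Z.of_nat j - Z.of_nat n)%Z by lia.
        replace (_ + 1)%Z with (2 * Z.of_nat (S j) - Z.of_nat n)%Z by lia.
        rewrite !srw_pmf_lattice, <- Binomial.pascal by lia. field. lra.
  - rewrite (srw_pmf_off_lattice (S n) k Hoff).
    rewrite (srw_pmf_off_lattice n (k - 1)), (srw_pmf_off_lattice n (k + 1)); [lra | |].
    + intros i Hi Hk. apply (Hoff i); lia.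
    + intros i Hi Hk. apply (Hoff (S i)); lia.
Qed.

Lemma srw_pmf_bounds n k : 0 <= srw_pmf n k <= 1.
Proof.
  revert k. induction n as [|n IH]; intros k.
  - rewrite srw_pmf_0. destruct Z.eq_dec; lra.
  - rewrite srw_pmf_succ. specialize (IH (k - 1)%Z) as H1. specialize (IH (k + 1)%Z). lra.
Qed.

Lemma srw_pmf_outside n k : (Z.of_nat n < Z.abs k)%Z -> srw_pmf n k = 0.
Proof.
  revert k. induction n as [|n IH]; intros k Hk.
  - rewrite srw_pmf_0. destruct Z.eq_dec; [lia | reflexivity].
  - rewrite srw_pmf_succ, !IH by lia. lra.
Qed.

Lemma srw_pmf_opp n k : srw_pmf n (- k) = srw_pmf n k.
Proof.
  revert k. induction n as [|n IH]; intros k.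
  - rewrite !srw_pmf_0. destruct (Z.eq_dec (- k) 0), (Z.eq_dec k 0); lia || reflexivity.
  - rewrite !srw_pmf_succ, <- (IH (k + 1)%Z), <- (IH (k - 1)%Z).
    replace (- (k + 1))%Z with (- k - 1)%Z by ring.
    replace (- (k - 1))%Z with (- k + 1)%Z by ring. lra.
Qed.

Lemma srw_pmf_top n : srw_pmf n (Z.of_nat n) = / 2 ^ n.
Proof.
  induction n as [|n IH].
  - rewrite srw_pmf_0. simpl. lra.
  - rewrite srw_pmf_succ, (srw_pmf_outside n (_ + 1)) by lia.
    replace (Z.of_nat (S n) - 1)%Z with (Z.of_nat n) by lia.
    rewrite IH. simpl. field. apply pow_nonzero. lra.
Qed.

Lemma srw_pmf_stein n k :
  IZR k * srw_pmf (S n) k = INR (S n) / 2 * (srw_pmf n (k - 1) - srw_pmf n (k + 1)).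
Proof.
  revert k. induction n as [|n IH]; intros k.
  - rewrite srw_pmf_succ, !srw_pmf_0. simpl INR.
    destruct (Z.eq_dec (k - 1) 0), (Z.eq_dec (k + 1) 0); try lia.
    + replace k with 1%Z by lia. simpl. lra.
    + replace k with (-1)%Z by lia. simpl. lra.
    + lra.
  - pose proof (IH (k - 1)%Z) as Hm. pose proof (IH (k + 1)%Z) as Hp.
    replace (k - 1 + 1)%Z with k in Hm by ring.
    replace (k + 1 - 1)%Z with k in Hp by ring.
    rewrite minus_IZR in Hm. rewrite plus_IZR in Hp.
    rewrite !srw_pmf_succ in *.
    replace (k - 1 + 1)%Z with k in * by ring.
    replace (k + 1 - 1)%Z with k in * by ring.
    rewrite !S_INR in *. lra.
Qed.

Lemma summableZ_srw_pmf n : summableZ (srw_pmf n).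
Proof.
  apply (summableZ_le _ (fun k => 2 ^ n * (/ 2) ^ Z.abs_nat k)).
  - intros k. destruct (srw_pmf_bounds n k) as [H0 H1]. rewrite Rabs_pos_eq by exact H0.
    destruct (Z_lt_le_dec (Z.of_nat n) (Z.abs k)) as [Hout | Hin].
    + rewrite srw_pmf_outside by exact Hout. apply Rmult_le_pos; apply pow_le; lra.
    + replace n with (n - Z.abs_nat k + Z.abs_nat k)%nat at 2 by lia.
      rewrite pow_add, Rmult_assoc, <- Rpow_mult_distr, Rinv_r, pow1, Rmult_1_r by lra.
      eapply Rle_trans; [exact H1 | apply pow_R1_Rle; lra].
  - apply summableZ_scal, (summableZ_abs_nat (fun n => (/ 2) ^ n)).
    + apply ex_series_geom. rewrite Rabs_pos_eq; lra.
    + intros m. apply pow_le. lra.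
Qed.

Lemma sumZ_srw_pmf n : sumZ (srw_pmf n) = 1.
Proof.
  induction n as [|n IH].
  - unfold sumZ. rewrite Series_incr_1 by apply summableZ_ex_series, summableZ_srw_pmf.
    rewrite !Series_0; [simpl; rewrite srw_pmf_0; simpl; ring | |];
      intros m; rewrite srw_pmf_0; destruct Z.eq_dec; lia || reflexivity.
  - rewrite (sumZ_ext _ (fun k => / 2 * srw_pmf n (k - 1)%Z + / 2 * srw_pmf n (k + 1)%Z))
      by (intros k; rewrite srw_pmf_succ; field).
    pose proof (summableZ_srw_pmf n) as Hs.
    pose proof (summableZ_shift _ (-1) Hs). pose proof (summableZ_shift _ 1 Hs).
    rewrite sumZ_plus, !sumZ_scal, (sumZ_shift _ (-1)), sumZ_shift, IH by
      auto using summableZ_scal.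
    field.
Qed.

Lemma sumZ_partial_srw_pmf_bounds n N : 0 <= sumZ_partial (srw_pmf n) N <= 1.
Proof.
  rewrite <- (sumZ_srw_pmf n). split.
  - apply sumZ_partial_nonneg, srw_pmf_bounds.
  - apply sumZ_partial_le; [apply summableZ_srw_pmf | apply srw_pmf_bounds].
Qed.

(** * The continuous-time walk as a Poisson mixture *)

Definition poisson (t : R) (n : nat) : R := exp (- t) * t ^ n / INR (fact n).

Lemma is_series_poisson t : is_series (poisson t) 1.
Proof.
  replace 1 with (exp t * exp (- t)) by (rewrite <- exp_plus, Rplus_opp_r; apply exp_0).
  assert (E : forall n, t ^ n / INR (fact n) * exp (- t) = poisson t n)
    by (intros n; unfold poisson; field; apply INR_fact_neq_0).
  exact (is_series_ext _ _ _ E (is_series_scal_r _ _ _ (is_series_exp t))).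
Qed.

Lemma poisson_nonneg t n : 0 <= t -> 0 <= poisson t n.
Proof.
  intros Ht. unfold poisson. apply Rmult_le_pos.
  - apply Rmult_le_pos; [left; apply exp_pos | now apply pow_le].
  - left. apply Rinv_0_lt_compat, lt_0_INR, lt_O_fact.
Qed.

Lemma poisson_succ t n : INR (S n) * poisson t (S n) = t * poisson t n.
Proof.
  unfold poisson. rewrite fact_simpl, mult_INR. simpl pow.
  field. split; [apply INR_fact_neq_0 | apply not_0_INR; lia].
Qed.

Lemma ctrw_pmf_Series t k : ctrw_pmf t k = Series (fun n => poisson t n * srw_pmf n k).
Proof. reflexivity. Qed.

Lemma ctrw_pmf_opp t k : ctrw_pmf t (- k) = ctrw_pmf t k.
Proof. rewrite !ctrw_pmf_Series. apply Series_ext. intros n. now rewrite srw_pmf_opp. Qed.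

Section CtrwPmf.

Variable t : R.
Hypothesis t_nonneg : 0 <= t.
Local Notation p := (ctrw_pmf t).

Lemma ex_series_poisson_srw_pmf k : ex_series (fun n => poisson t n * srw_pmf n k).
Proof.
  apply (ex_series_le (V := R_CompleteNormedModule) _ (poisson t)); [|eexists; apply is_series_poisson].
  intros n. change norm with Rabs.
  pose proof (poisson_nonneg t n t_nonneg). pose proof (srw_pmf_bounds n k).
  rewrite Rabs_pos_eq; nra.
Qed.

Lemma poisson_srw_pmf_nonneg k n : 0 <= poisson t n * srw_pmf n k.
Proof. apply Rmult_le_pos; [now apply poisson_nonneg | apply srw_pmf_bounds]. Qed.

Lemma ctrw_pmf_ge_term k n : poisson t n * srw_pmf n k <= p k.
Proof.
  apply (Series_ge_term (fun m => poisson t m * srw_pmf m k)).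
  - apply ex_series_poisson_srw_pmf.
  - intros m. apply poisson_srw_pmf_nonneg.
Qed.

Lemma ctrw_pmf_bounds k : 0 <= p k <= 1.
Proof.
  rewrite ctrw_pmf_Series. split.
  - apply Series_nonneg. intros n. apply poisson_srw_pmf_nonneg.
  - rewrite <- (is_series_unique _ _ (is_series_poisson t)).
    apply Series_le; [|eexists; apply is_series_poisson].
    intros n. pose proof (poisson_nonneg t n t_nonneg). pose proof (srw_pmf_bounds n k). split; nra.
Qed.

Lemma ctrw_pmf_stein k : IZR k * p k = t / 2 * (p (k - 1) - p (k + 1)).
Proof.
  rewrite !ctrw_pmf_Series, <- Series_scal_l.
  rewrite Series_incr_1 by (apply (ex_series_scal_l (V := R_NormedModule)), ex_series_poisson_srw_pmf).
  replace (IZR k * (poisson t 0 * srw_pmf 0 k)) with 0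
    by (rewrite srw_pmf_0; destruct Z.eq_dec as [->|]; simpl; ring).
  rewrite Rplus_0_l, <- Series_minus, <- Series_scal_l by apply ex_series_poisson_srw_pmf.
  apply Series_ext. intros n.
  transitivity (poisson t (S n) * (IZR k * srw_pmf (S n) k)); [ring|].
  rewrite srw_pmf_stein.
  transitivity ((INR (S n) * poisson t (S n)) / 2 * (srw_pmf n (k - 1) - srw_pmf n (k + 1))); [field|].
  rewrite poisson_succ. field.
Qed.

Lemma ctrw_pmf_ge k : exp (- t) * (t / 2) ^ Z.abs_nat k / INR (fact (Z.abs_nat k)) <= p k.
Proof.
  assert (Htop : srw_pmf (Z.abs_nat k) k = / 2 ^ Z.abs_nat k).
  { rewrite <- srw_pmf_top. destruct (Z_le_gt_dec 0 k).
    - f_equal. lia.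
    - rewrite <- srw_pmf_opp. f_equal. lia. }
  eapply Rle_trans; [|apply (ctrw_pmf_ge_term k (Z.abs_nat k))].
  rewrite Htop. unfold poisson, Rdiv. rewrite Rpow_mult_distr, pow_inv. right. ring.
Qed.

Lemma ctrw_pmf_le_nat n : p (Z.of_nat n) <= (t / 2) ^ n / INR (fact n).
Proof.
  induction n as [|n IH]; [simpl; pose proof (ctrw_pmf_bounds 0); lra|].
  pose proof (ctrw_pmf_stein (Z.of_nat (S n))) as Hst.
  replace (Z.of_nat (S n) - 1)%Z with (Z.of_nat n) in Hst by lia.
  rewrite <- INR_IZR_INZ in Hst.
  pose proof (ctrw_pmf_bounds (Z.of_nat (S n) + 1)).
  assert (Hfact : 0 < INR (fact n)) by apply lt_0_INR, lt_O_fact.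
  assert (HSn : 0 < INR (S n)) by (apply lt_0_INR; lia).
  apply (Rmult_le_reg_l (INR (S n))); [exact HSn|].
  rewrite Hst, fact_simpl, mult_INR. simpl pow.
  replace (INR (S n) * (t / 2 * (t / 2) ^ n / (INR (S n) * INR (fact n))))
    with (t / 2 * ((t / 2) ^ n / INR (fact n))) by (field; lra).
  apply Rmult_le_compat_l; lra.
Qed.

Lemma ctrw_pmf_le k : p k <= (t / 2) ^ Z.abs_nat k / INR (fact (Z.abs_nat k)).
Proof.
  rewrite <- ctrw_pmf_le_nat. destruct (Z_le_gt_dec 0 k).
  - right. f_equal. lia.
  - rewrite <- ctrw_pmf_opp. right. f_equal. lia.
Qed.

(* [p k <= (t/2)^|k| / |k|!] beats any polynomial weight, by [weight_pow_le_exp]. *)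
Lemma summableZ_mul_ctrw_pmf u : poly_bounded u -> summableZ (fun k => u k * p k).
Proof.
  intros [C [r Hu]]. pose proof (poly_bound_nonneg _ _ _ Hu) as HC.
  set (y := exp 1 * (t / 2)).
  assert (Hy : 0 <= y) by (unfold y; pose proof (exp_pos 1); nra).
  apply (summableZ_le _ (fun k => C * INR (fact r) * exp 1 * (y ^ Z.abs_nat k / INR (fact (Z.abs_nat k))))).
  - intros k. set (n := Z.abs_nat k).
    pose proof (ctrw_pmf_bounds k) as [Hp0 _].
    pose proof (ctrw_pmf_le k) as Hp. fold n in Hp.
    pose proof (weight_pow_le_exp k r) as Hw. fold n in Hw.
    rewrite Rabs_mult, (Rabs_pos_eq (p k)) by exact Hp0.
    apply Rle_trans with (C * (INR (fact r) * (exp 1 * exp 1 ^ n)) * ((t / 2) ^ n / INR (fact n))).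
    + apply Rmult_le_compat; [apply Rabs_pos | exact Hp0 | | exact Hp].
      eapply Rle_trans; [apply Hu | now apply Rmult_le_compat_l].
    + right. unfold y, Rdiv. rewrite (Rpow_mult_distr (exp 1)). ring.
  - apply summableZ_scal, (summableZ_abs_nat (fun n => y ^ n / INR (fact n))).
    + eexists. apply is_series_exp.
    + intros n. apply Rmult_le_pos; [now apply pow_le | left; apply Rinv_0_lt_compat, lt_0_INR, lt_O_fact].
Qed.

Lemma summableZ_ctrw_pmf : summableZ p.
Proof.
  apply (summableZ_ext _ (fun k => 1 * p k)); [intros; ring|].
  apply summableZ_mul_ctrw_pmf, poly_bounded_const.
Qed.

End CtrwPmf.

Lemma sumZ_partial_ctrw_pmf t N : 0 <= t ->
  sumZ_partial (ctrw_pmf t) N = Series (fun n => poisson t n * sumZ_partial (srw_pmf n) N).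
Proof.
  intros Ht. unfold ctrw_pmf at 1.
  rewrite sumZ_partial_Series by (intros; now apply ex_series_poisson_srw_pmf).
  apply Series_ext. intros n. apply sumZ_partial_scal.
Qed.

(* The window [-N-1, N] carries all the mass of [srw_pmf n] for [n <= N], so the partial
   sums of [ctrw_pmf t] are squeezed between those of [poisson t] and [1]. *)
Lemma sumZ_ctrw_pmf t : 0 <= t -> sumZ (ctrw_pmf t) = 1.
Proof.
  intros Ht.
  assert (Hterm : forall N n, 0 <= poisson t n * sumZ_partial (srw_pmf n) N <= poisson t n).
  { intros N n. pose proof (poisson_nonneg t n Ht). pose proof (sumZ_partial_srw_pmf_bounds n N). nra. }
  assert (Hup : forall N, sumZ_partial (ctrw_pmf t) N <= 1).
  { intros N. rewrite sumZ_partial_ctrw_pmf, <- (is_series_unique _ _ (is_series_poisson t)) by exact Ht.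
    apply Series_le; [apply Hterm | eexists; apply is_series_poisson]. }
  assert (Hlow : forall N, sum_n (poisson t) N <= sumZ_partial (ctrw_pmf t) N).
  { intros N. rewrite sumZ_partial_ctrw_pmf by exact Ht.
    rewrite (sum_n_ext_loc (poisson t) (fun n => poisson t n * sumZ_partial (srw_pmf n) N)).
    - apply sum_n_le_Series; [|apply Hterm].
      apply (ex_series_le (V := R_CompleteNormedModule) _ (poisson t)); [|eexists; apply is_series_poisson].
      intros n. change norm with Rabs. rewrite Rabs_pos_eq; apply Hterm.
    - intros n Hn. rewrite sumZ_partial_eq, sumZ_srw_pmf; [symmetry; apply Rmult_1_r | apply summableZ_srw_pmf |].
      intros k Hk. apply srw_pmf_outside. lia. }
  pose proof (is_lim_seq_sumZ_partial _ (summableZ_ctrw_pmf t Ht)) as Hlim.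
  assert (H1 : Rbar_le 1 (sumZ (ctrw_pmf t)))
    by (apply (is_lim_seq_le _ _ _ _ Hlow); [apply is_series_poisson | exact Hlim]).
  assert (H2 : Rbar_le (sumZ (ctrw_pmf t)) 1) by exact (is_lim_seq_le _ _ _ _ Hup Hlim (is_lim_seq_const 1)).
  simpl in H1, H2. lra.
Qed.

Lemma ctrw_pmf_pos t k : 0 < t -> 0 < ctrw_pmf t k.
Proof.
  intros Ht. eapply Rlt_le_trans; [|apply ctrw_pmf_ge; lra].
  apply Rmult_lt_0_compat.
  - apply Rmult_lt_0_compat; [apply exp_pos | apply pow_lt; lra].
  - apply Rinv_0_lt_compat, lt_0_INR, lt_O_fact.
Qed.

Lemma ln_ctrw_pmf_ge t k : 0 < t ->
  - t + INR (Z.abs_nat k) * ln (t / 2) - INR (Z.abs_nat k) ^ 2 <= ln (ctrw_pmf t k).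
Proof.
  intros Ht. set (n := Z.abs_nat k).
  pose proof (ctrw_pmf_ge t (Rlt_le _ _ Ht) k) as Hge. fold n in Hge.
  assert (Hf : 0 < INR (fact n)) by apply lt_0_INR, lt_O_fact.
  assert (Hpow : 0 < (t / 2) ^ n) by (apply pow_lt; lra).
  assert (Hlog : ln (exp (- t) * (t / 2) ^ n / INR (fact n))
                 = - t + INR n * ln (t / 2) - ln (INR (fact n))).
  { unfold Rdiv at 1. rewrite ln_mult, ln_mult, ln_exp, ln_pow, ln_Rinv; try ring;
      auto using exp_pos, Rinv_0_lt_compat, Rmult_lt_0_compat; lra. }
  assert (Hfact : ln (INR (fact n)) <= INR n ^ 2).
  { rewrite <- (ln_exp (INR n ^ 2)). apply ln_le; [exact Hf | apply fact_le_exp_sqr]. }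
  apply Rle_trans with (ln (exp (- t) * (t / 2) ^ n / INR (fact n))); [rewrite Hlog; lra|].
  apply ln_le; [|exact Hge].
  apply Rmult_lt_0_compat; [apply Rmult_lt_0_compat; [apply exp_pos | exact Hpow]|].
  now apply Rinv_0_lt_compat.
Qed.

Lemma poly_bounded_ln_ctrw_pmf t : 0 < t -> poly_bounded (fun k => ln (ctrw_pmf t k)).
Proof.
  intros Ht. exists (t + Rabs (ln (t / 2)) + 1), 2%nat. intros k.
  pose proof (ln_ctrw_pmf_ge t k Ht) as Hge.
  assert (Hle : ln (ctrw_pmf t k) <= 0).
  { rewrite <- ln_1. apply ln_le; [now apply ctrw_pmf_pos | apply ctrw_pmf_bounds; lra]. }
  rewrite Rabs_left1 by exact Hle. rewrite weight_abs_nat, S_INR.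
  set (n := INR (Z.abs_nat k)) in *. assert (Hn : 0 <= n) by apply pos_INR.
  pose proof (Rle_abs (- ln (t / 2))). rewrite Rabs_Ropp in *.
  assert (n * - ln (t / 2) <= n * Rabs (ln (t / 2))) by (apply Rmult_le_compat_l; lra).
  pose proof (Rabs_pos (ln (t / 2))). simpl. nra.
Qed.

(** * Moments *)

Section Moments.

Variable t : R.
Hypothesis t_nonneg : 0 <= t.
Local Notation p := (ctrw_pmf t).

Lemma summableZ_pow_ctrw_pmf n : summableZ (fun k => IZR k ^ n * p k).
Proof. apply summableZ_mul_ctrw_pmf; [exact t_nonneg | apply poly_bounded_pow, poly_bounded_IZR]. Qed.

Lemma sumZ_stein v : poly_bounded v ->
  sumZ (fun k => v k * IZR k * p k) = t / 2 * sumZ (fun k => (v (k + 1)%Z - v (k - 1)%Z) * p k).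
Proof.
  intros Hv.
  set (a := fun j => v (j + 1)%Z * p j). set (b := fun j => v (j - 1)%Z * p j).
  assert (Ha : summableZ a) by now apply summableZ_mul_ctrw_pmf, poly_bounded_shift.
  assert (Hb : summableZ b) by now apply summableZ_mul_ctrw_pmf, poly_bounded_shift.
  rewrite (sumZ_ext _ (fun k => t / 2 * (a (k - 1)%Z - b (k + 1)%Z))).
  - pose proof (summableZ_shift a (-1) Ha). pose proof (summableZ_shift b 1 Hb).
    rewrite sumZ_scal, sumZ_minus, (sumZ_shift _ (-1)), sumZ_shift, <- sumZ_minus by assumption.
    f_equal. apply sumZ_ext. intros k. unfold a, b. ring.
  - intros k. unfold a, b.
    replace (k - 1 + 1)%Z with k by ring. replace (k + 1 - 1)%Z with k by ring.
    rewrite Rmult_assoc, ctrw_pmf_stein by exact t_nonneg. ring.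
Qed.

Lemma sumZ_sq_ctrw_pmf : sumZ (fun k => IZR k ^ 2 * p k) = t.
Proof.
  rewrite (sumZ_ext _ (fun k => IZR k * IZR k * p k)) by (intros; ring).
  rewrite sumZ_stein by apply poly_bounded_IZR.
  rewrite (sumZ_ext _ (fun k => 2 * p k)) by (intros; rewrite plus_IZR, minus_IZR; ring).
  rewrite sumZ_scal, sumZ_ctrw_pmf by exact t_nonneg. field.
Qed.

Lemma sumZ_pow4_ctrw_pmf : sumZ (fun k => IZR k ^ 4 * p k) = 3 * t ^ 2 + t.
Proof.
  rewrite (sumZ_ext _ (fun k => IZR k ^ 3 * IZR k * p k)) by (intros; ring).
  rewrite sumZ_stein by apply poly_bounded_pow, poly_bounded_IZR.
  rewrite (sumZ_ext _ (fun k => 6 * (IZR k ^ 2 * p k) + 2 * p k))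
    by (intros; rewrite plus_IZR, minus_IZR; ring).
  rewrite sumZ_plus, !sumZ_scal, sumZ_sq_ctrw_pmf, sumZ_ctrw_pmf
    by auto using summableZ_scal, summableZ_pow_ctrw_pmf, summableZ_ctrw_pmf.
  field.
Qed.

Lemma sumZ_sq_centered_ctrw_pmf : sumZ (fun k => (IZR k ^ 2 - t) * p k) = 0.
Proof.
  rewrite (sumZ_ext _ (fun k => IZR k ^ 2 * p k - t * p k)) by (intros; ring).
  rewrite sumZ_minus, sumZ_scal, sumZ_sq_ctrw_pmf, sumZ_ctrw_pmf
    by auto using summableZ_scal, summableZ_pow_ctrw_pmf, summableZ_ctrw_pmf.
  ring.
Qed.

Lemma sumZ_sq_centered_sq_ctrw_pmf : sumZ (fun k => (IZR k ^ 2 - t) ^ 2 * p k) = 2 * t ^ 2 + t.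
Proof.
  rewrite (sumZ_ext _ (fun k => IZR k ^ 4 * p k - 2 * t * (IZR k ^ 2 * p k) + t ^ 2 * p k)) by (intros; ring).
  rewrite sumZ_plus, sumZ_minus, !sumZ_scal, sumZ_pow4_ctrw_pmf, sumZ_sq_ctrw_pmf, sumZ_ctrw_pmf
    by (try apply summableZ_minus; auto using summableZ_scal, summableZ_pow_ctrw_pmf, summableZ_ctrw_pmf).
  ring.
Qed.

Lemma summableZ_sq_ctrw_pmf_pred : summableZ (fun k => IZR k ^ 2 * p (k - 1)%Z).
Proof.
  apply (summableZ_ext _ (fun k => (fun j => IZR (j + 1) ^ 2 * p j) (k + -1)%Z)).
  - intros k. cbv beta. do 3 f_equal. ring.
  - apply (summableZ_shift (fun j => IZR (j + 1) ^ 2 * p j)), summableZ_mul_ctrw_pmf; [exact t_nonneg|].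
    apply poly_bounded_pow, (poly_bounded_shift IZR), poly_bounded_IZR.
Qed.

Lemma Series_sq_ctrw_pmf : Series (fun n => IZR (Z.of_nat n) ^ 2 * p (Z.of_nat n)) = t / 2.
Proof.
  pose proof sumZ_sq_ctrw_pmf as Hsum.
  rewrite sumZ_even in Hsum; [| apply summableZ_pow_ctrw_pmf |].
  - rewrite pow_i, Rmult_0_l in Hsum by lia. lra.
  - intros k. rewrite opp_IZR, ctrw_pmf_opp. ring.
Qed.

Lemma Series_sq_ctrw_pmf_pred_le :
  Series (fun n => IZR (Z.of_nat n) ^ 2 * p (Z.of_nat n - 1)%Z) <= t + 2.
Proof.
  destruct (summableZ_ex_series _ summableZ_sq_ctrw_pmf_pred) as [Hex _].
  destruct (summableZ_ex_series _ (summableZ_pow_ctrw_pmf 2)) as [Hsq _].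
  destruct (summableZ_ex_series _ (summableZ_ctrw_pmf t t_nonneg)) as [Hp _].
  rewrite Series_incr_1 by exact Hex. simpl (IZR (Z.of_nat 0)). rewrite pow_i, Rmult_0_l, Rplus_0_l by lia.
  apply Rle_trans with (Series (fun n => 2 * (IZR (Z.of_nat n) ^ 2 * p (Z.of_nat n)) + 2 * p (Z.of_nat n))).
  - apply Series_le_Series.
    + now apply (ex_series_incr_1 (fun n => IZR (Z.of_nat n) ^ 2 * p (Z.of_nat n - 1)%Z)).
    + apply (ex_series_plus (V := R_NormedModule)); now apply (ex_series_scal_l (V := R_NormedModule)).
    + intros n. replace (Z.of_nat (S n) - 1)%Z with (Z.of_nat n) by lia.
      rewrite Nat2Z.inj_succ, succ_IZR.
      pose proof (ctrw_pmf_bounds t t_nonneg (Z.of_nat n)).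
      pose proof (pow2_ge_0 (IZR (Z.of_nat n) - 1)). nra.
  - rewrite Series_plus, !Series_scal_l, Series_sq_ctrw_pmf
      by now apply (ex_series_scal_l (V := R_NormedModule)).
    pose proof (Series_nat_le_sumZ p (fun k => proj1 (ctrw_pmf_bounds t t_nonneg k))).
    rewrite sumZ_ctrw_pmf in * by exact t_nonneg. lra.
Qed.

End Moments.

(** * Entropy increments *)

Section Entropy.

Variable t : R.
Hypothesis t_pos : 0 < t.
Local Notation p := (ctrw_pmf t).
Local Notation G k := (ln (ctrw_pmf t k)).

Let t_nonneg : 0 <= t := Rlt_le _ _ t_pos.

Lemma poly_bounded_ln_shift d : poly_bounded (fun k => G (k + d)%Z).
Proof. apply (poly_bounded_shift (fun k => G k)), poly_bounded_ln_ctrw_pmf, t_pos. Qed.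

Lemma sumZ_ln_ctrw_pmf_shift_le d : sumZ (fun k => (G (k + d)%Z - G k) * p k) <= 0.
Proof.
  pose proof (summableZ_ctrw_pmf t t_nonneg) as Hp.
  rewrite (sumZ_ext _ (fun k => p k * (G (k + d)%Z - G k))) by (intros; ring).
  eapply Rle_trans.
  - apply (sumZ_mul_ln_ratio_le p (fun k => p (k + d)%Z));
      auto using ctrw_pmf_pos, summableZ_shift.
    apply (summableZ_ext _ (fun k => (G (k + d)%Z - G k) * p k)); [intros; ring|].
    apply summableZ_mul_ctrw_pmf; [exact t_nonneg|].
    apply poly_bounded_minus; [apply poly_bounded_ln_shift | apply poly_bounded_ln_ctrw_pmf, t_pos].
  - rewrite sumZ_shift by exact Hp. lra.
Qed.

(* Gibbs and the Stein identity give
   [ln (p (k+1) / p (k-1)) <= - (2/t) k p k / p (k-1)]; then apply [neg_sq_div_le]. *)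
Lemma ctrw_pmf_ln_gradient_le k lam : (0 <= k)%Z ->
  IZR k * (G (k + 1)%Z - G (k - 1)%Z) * p k
  <= 2 / t * (lam ^ 2 * (IZR k ^ 2 * p (k - 1)%Z) - 2 * lam * (IZR k ^ 2 * p k)).
Proof.
  intros Hk.
  pose proof (ctrw_pmf_pos t (k - 1) t_pos) as Hq. pose proof (ctrw_pmf_pos t (k + 1) t_pos).
  pose proof (ctrw_pmf_pos t k t_pos).
  assert (Hx : 0 <= IZR k * p k) by (apply Rmult_le_pos; [apply (IZR_le 0 k Hk) | lra]).
  assert (Hgrad : G (k + 1)%Z - G (k - 1)%Z <= - (2 / t) * (IZR k * p k) / p (k - 1)%Z).
  { apply (Rmult_le_reg_l (p (k - 1)%Z)); [exact Hq|].
    eapply Rle_trans; [now apply mul_ln_ratio_le|].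
    rewrite ctrw_pmf_stein by exact t_nonneg. right. field. lra. }
  apply Rle_trans with (2 / t * - ((IZR k * p k) ^ 2 / p (k - 1)%Z)).
  - apply Rmult_le_compat_l with (r := IZR k * p k) in Hgrad; [|exact Hx].
    replace (2 / t * - ((IZR k * p k) ^ 2 / p (k - 1)%Z))
      with (IZR k * p k * (- (2 / t) * (IZR k * p k) / p (k - 1)%Z)) by (field; lra).
    lra.
  - apply Rmult_le_compat_l; [apply Rlt_le, Rdiv_lt_0_compat; lra|].
    eapply Rle_trans; [apply (neg_sq_div_le _ _ (lam * IZR k) Hq)|]. right. ring.
Qed.

Lemma poly_bounded_ln_gradient :
  poly_bounded (fun k => IZR k * (G (k + 1)%Z - G (k - 1)%Z)).
Proof.
  apply poly_bounded_mult; [apply poly_bounded_IZR|].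
  apply poly_bounded_minus; apply poly_bounded_ln_shift.
Qed.

Lemma Series_ln_gradient_ctrw_pmf_le lam :
  Series (fun n => IZR (Z.of_nat n) * (G (Z.of_nat n + 1)%Z - G (Z.of_nat n - 1)%Z) * p (Z.of_nat n))
  <= 2 / t * (lam ^ 2 * (t + 2) - 2 * lam * (t / 2)).
Proof.
  destruct (summableZ_ex_series _ (summableZ_mul_ctrw_pmf t t_nonneg _ poly_bounded_ln_gradient)) as [HexA _].
  destruct (summableZ_ex_series _ (summableZ_sq_ctrw_pmf_pred t t_nonneg)) as [Hm _].
  destruct (summableZ_ex_series _ (summableZ_pow_ctrw_pmf t t_nonneg 2)) as [H0 _].
  eapply Rle_trans.
  - apply (Series_le_Series _ (fun n => 2 / t * (lam ^ 2 * (IZR (Z.of_nat n) ^ 2 * p (Z.of_nat n - 1)%Z)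
                                 - 2 * lam * (IZR (Z.of_nat n) ^ 2 * p (Z.of_nat n))))).
    + exact HexA.
    + apply (ex_series_scal_l (V := R_NormedModule)), (ex_series_minus (V := R_NormedModule));
        now apply (ex_series_scal_l (V := R_NormedModule)).
    + intros n. apply ctrw_pmf_ln_gradient_le. lia.
  - rewrite Series_scal_l, Series_minus, !Series_scal_l, Series_sq_ctrw_pmf
      by (exact t_nonneg || now apply (ex_series_scal_l (V := R_NormedModule))).
    pose proof (Series_sq_ctrw_pmf_pred_le t t_nonneg).
    apply Rmult_le_compat_l; [apply Rlt_le, Rdiv_lt_0_compat; lra|].
    assert (0 <= lam ^ 2) by apply pow2_ge_0. nra.
Qed.

Lemma sumZ_ln_gradient_ctrw_pmf_le :
  sumZ (fun k => IZR k * (G (k + 1)%Z - G (k - 1)%Z) * p k) <= - (t / (t + 2)).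
Proof.
  rewrite sumZ_even.
  - simpl IZR. rewrite !Rmult_0_l, Rminus_0_r.
    (* This [lam] optimizes the bound of [Series_ln_gradient_ctrw_pmf_le]. *)
    pose proof (Series_ln_gradient_ctrw_pmf_le (t / (2 * (t + 2)))) as H.
    replace (- (t / (t + 2))) with (2 * (2 / t * ((t / (2 * (t + 2))) ^ 2 * (t + 2)
                                                 - 2 * (t / (2 * (t + 2))) * (t / 2))))
      by (field; lra).
    lra.
  - exact (summableZ_mul_ctrw_pmf t t_nonneg _ poly_bounded_ln_gradient).
  - intros k. rewrite opp_IZR, ctrw_pmf_opp.
    replace (- k + 1)%Z with (- (k - 1))%Z by ring. replace (- k - 1)%Z with (- (k + 1))%Z by ring.
    rewrite !ctrw_pmf_opp. ring.
Qed.

Lemma sumZ_sq_centered_ln_ctrw_pmf_le :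
  sumZ (fun k => (IZR k ^ 2 - t) * G k * p k) <= - (t / 2) * (t / (t + 2)).
Proof.
  pose proof (poly_bounded_ln_ctrw_pmf t t_pos) as HG.
  assert (HB : forall d, summableZ (fun k => (G (k + d)%Z - G k) * p k)).
  { intros d. apply summableZ_mul_ctrw_pmf; [exact t_nonneg|].
    apply poly_bounded_minus; [apply poly_bounded_ln_shift | exact HG]. }
  pose proof (summableZ_mul_ctrw_pmf t t_nonneg _ poly_bounded_ln_gradient) as HA.
  pose proof (summableZ_mul_ctrw_pmf t t_nonneg _ HG) as HGp.
  rewrite (sumZ_ext _ (fun k => IZR k * G k * IZR k * p k - t * (G k * p k))) by (intros; ring).
  rewrite sumZ_minus, sumZ_scal, sumZ_stein by (auto using summableZ_scal, summableZ_mul_ctrw_pmf,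
    poly_bounded_mult, poly_bounded_IZR).
  rewrite (sumZ_ext _ (fun k => (IZR k * (G (k + 1)%Z - G (k - 1)%Z) * p k
                                + (G (k + 1)%Z - G k) * p k + (G (k - 1)%Z - G k) * p k)
                                + 2 * (G k * p k)))
    by (intros; rewrite plus_IZR, minus_IZR; ring).
  pose proof (HB 1%Z) as HB1. pose proof (HB (-1)%Z) as HBm1.
  change (summableZ (fun k => (G (k - 1)%Z - G k) * p k)) in HBm1.
  rewrite sumZ_plus, sumZ_scal, !sumZ_plus by auto using summableZ_plus, summableZ_scal.
  pose proof sumZ_ln_gradient_ctrw_pmf_le.
  pose proof (sumZ_ln_ctrw_pmf_shift_le 1).
  pose proof (sumZ_ln_ctrw_pmf_shift_le (-1)) as HC.
  change (sumZ (fun k => (G (k - 1)%Z - G k) * p k) <= 0) in HC.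
  nra.
Qed.

End Entropy.

Lemma varent_ctrw_pmf_nonneg t : 0 <= t -> 0 <= varent (ctrw_pmf t).
Proof.
  intros Ht. apply sumZ_nonneg. intros k.
  apply Rmult_le_pos; [apply ctrw_pmf_bounds, Ht | apply pow2_ge_0].
Qed.

Lemma varent_ctrw_pmf_ge_large t : 1 <= t -> 1 / 108 <= varent (ctrw_pmf t).
Proof.
  intros Ht1. assert (Ht : 0 < t) by lra. assert (Ht0 : 0 <= t) by lra.
  pose proof (poly_bounded_ln_ctrw_pmf t Ht) as HG.
  assert (Hz : poly_bounded (fun k => IZR k ^ 2 - t))
    by (apply poly_bounded_minus; [apply poly_bounded_pow, poly_bounded_IZR | apply poly_bounded_const]).
  pose proof (sumZ_sq_centered_ln_ctrw_pmf_le t Ht) as Hcov.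
  (* Given [E[z ln p] <= - t/6] and [E[z^2] <= 3 t^2], the weight [lam = 1/(18 t)] is optimal. *)
  eapply Rle_trans; [|apply (varZ_ge_cov_test _ _ (fun k => IZR k ^ 2 - t) (/ (18 * t)))].
  - rewrite sumZ_sq_centered_sq_ctrw_pmf by exact Ht0. set (lam := / (18 * t)).
    assert (Hlam : 0 < lam) by (apply Rinv_0_lt_compat; lra).
    assert (Hlt : lam * t = 1 / 18) by (unfold lam; field; lra).
    assert (Hratio : t / 6 <= t / 2 * (t / (t + 2)))
      by (apply (Rmult_le_reg_r (6 * (t + 2))); [lra|]; field_simplify; nra).
    assert (- 2 * lam * sumZ (fun k => (IZR k ^ 2 - t) * ln (ctrw_pmf t k) * ctrw_pmf t k) >= 1 / 54)
      by nra.
    assert (lam ^ 2 * (2 * t ^ 2 + t) <= 1 / 108) by nra.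
    lra.
  - intros k. apply ctrw_pmf_bounds, Ht0.
  - apply (summableZ_ext _ (fun k => (ln (ctrw_pmf t k) - expectZ (ctrw_pmf t) (fun j => ln (ctrw_pmf t j))) ^ 2
                                     * ctrw_pmf t k)); [intros; ring|].
    apply summableZ_mul_ctrw_pmf, poly_bounded_pow, poly_bounded_minus; [exact Ht0 | exact HG | apply poly_bounded_const].
  - apply summableZ_mul_ctrw_pmf, poly_bounded_mult; [exact Ht0 | exact Hz | exact HG].
  - apply summableZ_mul_ctrw_pmf; [exact Ht0 | exact Hz].
  - apply summableZ_mul_ctrw_pmf, poly_bounded_pow; [exact Ht0 | exact Hz].
  - now apply sumZ_sq_centered_ctrw_pmf.
Qed.

Lemma ln_1_plus_inv_sqrt_bounds t : 0 < t -> 0 <= ln (1 + / sqrt t) <= / sqrt t.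
Proof.
  intros Ht. assert (Hs : 0 < / sqrt t) by apply Rinv_0_lt_compat, sqrt_lt_R0, Ht.
  split.
  - rewrite <- ln_1. apply ln_le; lra.
  - rewrite <- (ln_exp (/ sqrt t)) at 2. apply ln_le; [lra | apply exp_ineq1_le].
Qed.

Lemma ln_1_plus_inv_sqrt_le_ln t : 0 < t <= 1 -> ln (1 + / sqrt t) <= ln (2 / t).
Proof.
  intros [Ht Ht1]. pose proof (sqrt_lt_R0 t Ht) as Hs.
  apply ln_le; [apply Rplus_lt_le_0_compat; [lra | left; now apply Rinv_0_lt_compat]|].
  assert (Hst : t <= sqrt t).
  { pose proof (sqrt_sqrt t (Rlt_le _ _ Ht)). pose proof (sqrt_le_1_alt t 1 Ht1). rewrite sqrt_1 in *. nra. }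
  assert (/ sqrt t <= / t) by now apply Rinv_le_contravar.
  assert (1 <= / t) by (rewrite <- Rinv_1; apply Rinv_le_contravar; lra).
  unfold Rdiv. lra.
Qed.

(* By the Stein identity at [k = 1], [p 1 <= (t/2) p 0]. *)
Lemma ctrw_pmf_0_1_small t : 0 < t <= 1 ->
  t / 6 <= ctrw_pmf t 0 /\ t / 6 <= ctrw_pmf t 1 /\ ln (2 / t) <= ln (ctrw_pmf t 0) - ln (ctrw_pmf t 1).
Proof.
  intros [Ht Ht1]. assert (Ht0 : 0 <= t) by lra.
  pose proof (ctrw_pmf_ge t Ht0 0) as Hp0. pose proof (ctrw_pmf_ge t Ht0 1) as Hp1. simpl in Hp0, Hp1.
  pose proof (ctrw_pmf_pos t 0 Ht). pose proof (ctrw_pmf_pos t 1 Ht).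
  assert (He : / 3 <= exp (- t)).
  { apply Rle_trans with (exp (Ropp 1)); [|apply exp_le_compat; lra].
    rewrite exp_Ropp. apply Rinv_le_contravar; [apply exp_pos | apply exp_le_3]. }
  assert (Hstein : ctrw_pmf t 1 <= t / 2 * ctrw_pmf t 0).
  { pose proof (ctrw_pmf_stein t Ht0 1) as St. pose proof (ctrw_pmf_bounds t Ht0 2).
    simpl in St. nra. }
  split; [nra | split; [nra|]].
  replace (2 / t) with (/ (t / 2)) by (field; lra).
  rewrite ln_Rinv by lra. pose proof (ln_le _ _ (ctrw_pmf_pos t 1 Ht) Hstein).
  rewrite ln_mult in * by lra. lra.
Qed.

Lemma varent_ctrw_pmf_ge_small t : 0 < t <= 1 ->
  t * ln (1 + / sqrt t) ^ 2 / 12 <= varent (ctrw_pmf t).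
Proof.
  intros Ht. unfold varent, varZ, expectZ. set (m := sumZ (fun k => ctrw_pmf t k * ln (ctrw_pmf t k))).
  eapply Rle_trans; [|apply sumZ_ge_0_1].
  2: { apply (summableZ_ext _ (fun k => (ln (ctrw_pmf t k) - m) ^ 2 * ctrw_pmf t k)); [intros; ring|].
       apply summableZ_mul_ctrw_pmf, poly_bounded_pow, poly_bounded_minus;
         [lra | apply poly_bounded_ln_ctrw_pmf; lra | apply poly_bounded_const]. }
  2: { intros k. apply Rmult_le_pos; [apply ctrw_pmf_bounds; lra | apply pow2_ge_0]. }
  destruct (ctrw_pmf_0_1_small t Ht) as [Hp0 [Hp1 Hab]].
  set (a := ln (ctrw_pmf t 0) - m) in *. set (b := ln (ctrw_pmf t 1) - m) in *.
  pose proof (ln_1_plus_inv_sqrt_le_ln t Ht).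
  pose proof (ln_1_plus_inv_sqrt_bounds t (proj1 Ht)) as [HL0 _].
  assert (ln (1 + / sqrt t) ^ 2 <= (a - b) ^ 2) by (apply pow_incr; unfold a, b; lra).
  assert ((a - b) ^ 2 <= 2 * (a ^ 2 + b ^ 2)) by (pose proof (pow2_ge_0 (a + b)); nra).
  assert (t / 6 * a ^ 2 <= ctrw_pmf t 0 * a ^ 2) by (apply Rmult_le_compat_r; [apply pow2_ge_0 | exact Hp0]).
  assert (t / 6 * b ^ 2 <= ctrw_pmf t 1 * b ^ 2) by (apply Rmult_le_compat_r; [apply pow2_ge_0 | exact Hp1]).
  nra.
Qed.

Lemma calV_le_1 t : 1 <= t -> calV t <= 1.
Proof.
  intros Ht. unfold calV. destruct (Req_EM_T t 0) as [|Ht0]; [lra|].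
  pose proof (ln_1_plus_inv_sqrt_bounds t ltac:(lra)) as [HL0 HL1].
  apply Rle_trans with (t * (/ sqrt t) ^ 2).
  - apply Rmult_le_compat_l; [lra|]. now apply pow_incr.
  - rewrite pow_inv, <- Rsqr_pow2, Rsqr_sqrt by lra. right. field. lra.
Qed.

Lemma varent_ctrw_pmf_ge_calV t : 0 <= t -> calV t / 108 <= varent (ctrw_pmf t).
Proof.
  intros Ht. pose proof (varent_ctrw_pmf_nonneg t Ht).
  destruct (Rle_or_lt t 1) as [Ht1 | Ht1].
  - unfold calV. destruct (Req_EM_T t 0) as [|Ht0]; [lra|].
    pose proof (varent_ctrw_pmf_ge_small t ltac:(lra)).
    pose proof (Rmult_le_pos _ _ Ht (pow2_ge_0 (ln (1 + / sqrt t)))). lra.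
  - pose proof (varent_ctrw_pmf_ge_large t ltac:(lra)). pose proof (calV_le_1 t ltac:(lra)). lra.
Qed.

Theorem lemma5 :
  exists c : R, 0 < c /\
    forall t : R, 0 <= t -> varent (ctrw_pmf t) >= c * calV t.
Proof.
  exists (1 / 108). split; [lra|].
  intros t Ht. pose proof (varent_ctrw_pmf_ge_calV t Ht). lra.
Qed.
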